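(* Let $\nu\ge1$, $d:\mathbb{Z}^\nu\to\mathbb{C}$ bounded, $J=J_0+D$ on $\ell^2(\mathbb{Z}^\nu)$. (i) If $a\in\mathbb{R}$ is not an eigenvalue of $J_0+\Re(D)$, then $J$ has no boundary eigenvalue with real part $a$. (ii) Let $b\in\mathbb{R}$. If $\Im(d(k))\neq b$ for all $k\in\mathbb{Z}^\nu$, then $J$ has no boundary eigenvalue with imaginary part $b$.
   Context: $J_0$ is the discrete Laplacian on $\ell^2(\mathbb{Z}^\nu)$: $(J_0u)(k)=\sum_{l\in\mathbb{Z}^\nu:\|l\|_1=1}u(k+l)$, where $\|l\|_1=\sum_{j=1}^\nu|l_j|$. For a bounded $d:\mathbb{Z}^\nu\to\mathbb{C}$, $D$ is multiplication by $d$, and $\Re(D)$, $\Im(D)$ are multiplication by $\Re(d(k))$, $\Im(d(k))$. The numerical range is $\operatorname{Num}(J)=\{\langle Ju,u\rangle:\|u\|=1\}$, and a boundary eigenvalue of $J$ is an eigenvalue of $J$ lying in the topological boundary of $\operatorname{Num}(J)$. *)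

From Stdlib Require Import Reals Lra ZArith List.
Open Scope R_scope.

Definition Cx : Type := (R * R)%type.
Definition Re (z : Cx) : R := fst z.
Definition Im (z : Cx) : R := snd z.
Definition C0 : Cx := (0, 0).
Definition RtoC (a : R) : Cx := (a, 0).
Definition Cadd (z w : Cx) : Cx := (fst z + fst w, snd z + snd w).
Definition Csub (z w : Cx) : Cx := (fst z - fst w, snd z - snd w).
Definition Cmul (z w : Cx) : Cx :=
  (fst z * fst w - snd z * snd w, fst z * snd w + snd z * fst w).
Definition Cconj (z : Cx) : Cx := (fst z, - snd z).
Definition Cmod (z : Cx) : R := sqrt (fst z * fst z + snd z * snd z).

Definition lat (nu : nat) (k : list Z) : Prop := length k = nu.

(** k + s e_j  (change the j-th coordinate of k by s) *)
Definition shift (k : list Z) (j : nat) (s : Z) : list Z :=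
  firstn j k ++ (nth j k 0%Z + s)%Z :: skipn (S j) k.

Definition fsum (F : list (list Z)) (f : list Z -> Cx) : Cx :=
  fold_right (fun k acc => Cadd (f k) acc) C0 F.

(** f : Z^nu -> Cx is (unconditionally) summable over Z^nu with sum S:
    the net of finite partial sums converges to S. *)
Definition has_sum (nu : nat) (f : list Z -> Cx) (S : Cx) : Prop :=
  forall eps : R, 0 < eps ->
    exists F0 : list (list Z), Forall (lat nu) F0 /\
      forall F : list (list Z), NoDup F -> Forall (lat nu) F -> incl F0 F ->
        Cmod (Csub (fsum F f) S) < eps.

Definition l2 (nu : nat) (u : list Z -> Cx) : Prop :=
  exists S : Cx, has_sum nu (fun k => RtoC (Cmod (u k) * Cmod (u k))) S.

Definition unit_norm (nu : nat) (u : list Z -> Cx) : Prop :=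
  has_sum nu (fun k => RtoC (Cmod (u k) * Cmod (u k))) (RtoC 1).

Definition inner_is (nu : nat) (v u : list Z -> Cx) (z : Cx) : Prop :=
  has_sum nu (fun k => Cmul (v k) (Cconj (u k))) z.

Definition Operator := (list Z -> Cx) -> (list Z -> Cx).

(** discrete Laplacian: (J0 u)(k) = sum_{||l||_1 = 1} u(k+l)
    = sum_{j < nu} (u(k + e_j) + u(k - e_j)) *)
Definition J0 (nu : nat) : Operator := fun u k =>
  fold_right (fun j acc => Cadd (Cadd (u (shift k j 1%Z)) (u (shift k j (-1)%Z))) acc)
             C0 (seq 0 nu).

Definition Mult (d : list Z -> Cx) : Operator := fun u k => Cmul (d k) (u k).

Definition Jop (nu : nat) (d : list Z -> Cx) : Operator :=
  fun u k => Cadd (J0 nu u k) (Mult d u k).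

Definition ReD (d : list Z -> Cx) : list Z -> Cx := fun k => RtoC (Re (d k)).

Definition bounded_on (nu : nat) (d : list Z -> Cx) : Prop :=
  exists M : R, forall k, lat nu k -> Cmod (d k) <= M.

Definition Num (nu : nat) (A : Operator) (z : Cx) : Prop :=
  exists u, l2 nu u /\ unit_norm nu u /\ inner_is nu (A u) u z.

Definition eigenvalue (nu : nat) (A : Operator) (lam : Cx) : Prop :=
  exists u, l2 nu u /\ (exists k, lat nu k /\ u k <> C0) /\
    forall k, lat nu k -> A u k = Cmul lam (u k).

Definition in_boundary (S : Cx -> Prop) (z : Cx) : Prop :=
  forall eps : R, 0 < eps ->
    (exists w, S w /\ Cmod (Csub w z) < eps) /\
    (exists w, ~ S w /\ Cmod (Csub w z) < eps).

Definition boundary_eigenvalue (nu : nat) (A : Operator) (lam : Cx) : Prop :=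
  eigenvalue nu A lam /\ in_boundary (Num nu A) lam.

(* Let lam be an eigenvalue of J with eigenvector u that lies on the boundary of Num(J),
   and let m be a lattice point with u(m) <> 0.  Compress J to the plane spanned by u and
   delta_m - w u, where w = conj(u m) / |u|^2 makes the second vector orthogonal to u.
   Since J u = lam u the compression is upper triangular, [[lam, c], [0, *]], with
   off-diagonal entry c = <(J - lam) delta_m, u> = 2i (Im d(m) - Im lam) conj(u m).
   If c <> 0, the numerical range of this 2x2 matrix (an elliptical disc) contains a whole
   neighbourhood of lam, and it is contained in Num(J): lam would be an interior point.
   (When u is supported at m alone, J u = lam u forces lam = d m, so c = 0 again.)
   Hence a boundary eigenvector is supported on {k : Im d(k) = Im lam}
   (boundary_eigenvector_support).  Part (ii) follows at once, and part (i) because on that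
   support J u = lam u reads (J0 + Re D) u = (Re lam) u. *)

From Stdlib Require Import Reals ZArith List Lra Lia Psatz Classical.
Open Scope R_scope.

(* Squared modulus; used instead of [Cmod] to keep identities polynomial. *)
Definition nsq (z : Cx) : R := fst z * fst z + snd z * snd z.

Lemma Cx_ext (z w : Cx) : fst z = fst w -> snd z = snd w -> z = w.
Proof. destruct z, w; simpl; intros -> ->; reflexivity. Qed.

Ltac cx_unfold := unfold Cadd, Csub, Cmul, Cconj, RtoC, C0, nsq in *; simpl in *.
Ltac cx_ring := apply Cx_ext; cx_unfold; ring.

Lemma nsq_nonneg (z : Cx) : 0 <= nsq z.
Proof. unfold nsq; nra. Qed.

Lemma nsq_pos (z : Cx) : z <> C0 -> 0 < nsq z.
Proof.
  intros Hz. destruct (Rle_lt_or_eq_dec 0 (nsq z) (nsq_nonneg z)) as [|E]; auto.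
  exfalso; apply Hz. destruct z as [x y]; unfold nsq, C0 in *; simpl in *.
  apply Cx_ext; simpl; nra.
Qed.

Lemma Cmod_sq (z : Cx) : Cmod z * Cmod z = nsq z.
Proof. apply sqrt_sqrt, nsq_nonneg. Qed.

Lemma Cmul_conj_self (z : Cx) : Cmul z (Cconj z) = RtoC (nsq z).
Proof. cx_ring. Qed.

Lemma nsq_Cmul (z w : Cx) : nsq (Cmul z w) = nsq z * nsq w.
Proof. cx_unfold; ring. Qed.

Lemma Cmul_eq_C0 (w z : Cx) : Cmul w z = C0 -> w = C0 \/ z = C0.
Proof.
  intros H. assert (E : nsq w * nsq z = 0) by (rewrite <- nsq_Cmul, H; cx_unfold; ring).
  destruct (classic (w = C0)) as [|Hw]; [left; auto|right].
  destruct (classic (z = C0)) as [|Hz]; auto.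
  pose proof (nsq_pos w Hw); pose proof (nsq_pos z Hz). nra.
Qed.

Definition Cinv (z : Cx) : Cx := (fst z / nsq z, - snd z / nsq z).

Lemma Cmul_Cinv (z : Cx) : z <> C0 -> Cmul z (Cinv z) = RtoC 1.
Proof.
  intros Hz. pose proof (nsq_pos z Hz). unfold Cinv.
  apply Cx_ext; cx_unfold; field; lra.
Qed.

Lemma nsq_Cinv (z : Cx) : z <> C0 -> nsq (Cinv z) = / nsq z.
Proof. intros Hz. pose proof (nsq_pos z Hz). unfold Cinv. cx_unfold. field. lra. Qed.

Definition fsumR (F : list (list Z)) (g : list Z -> R) : R :=
  fold_right (fun k acc => g k + acc) 0 F.

Definition has_sumR (nu : nat) (g : list Z -> R) (s : R) : Prop :=
  forall eps, 0 < eps -> exists F0, Forall (lat nu) F0 /\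
    forall F, NoDup F -> Forall (lat nu) F -> incl F0 F -> Rabs (fsumR F g - s) < eps.

Lemma fsum_fst F f : fst (fsum F f) = fsumR F (fun k => fst (f k)).
Proof. induction F as [|k F IH]; simpl; [reflexivity|]. rewrite IH; reflexivity. Qed.

Lemma fsum_snd F f : snd (fsum F f) = fsumR F (fun k => snd (f k)).
Proof. induction F as [|k F IH]; simpl; [reflexivity|]. rewrite IH; reflexivity. Qed.

Lemma Cmod_le_components (z : Cx) : Cmod z <= Rabs (fst z) + Rabs (snd z).
Proof.
  pose proof (Rabs_pos (fst z)); pose proof (Rabs_pos (snd z)).
  rewrite <- (sqrt_Rsqr (Rabs (fst z) + Rabs (snd z))) by lra.
  apply sqrt_le_1_alt. unfold Rsqr.
  assert (fst z * fst z = Rabs (fst z) * Rabs (fst z))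
    by (rewrite <- Rabs_mult, Rabs_pos_eq; nra).
  assert (snd z * snd z = Rabs (snd z) * Rabs (snd z))
    by (rewrite <- Rabs_mult, Rabs_pos_eq; nra).
  nra.
Qed.

Lemma components_le_Cmod (z : Cx) : Rabs (fst z) <= Cmod z /\ Rabs (snd z) <= Cmod z.
Proof.
  unfold Cmod. rewrite <- !sqrt_Rsqr_abs.
  split; apply sqrt_le_1_alt; unfold Rsqr; nra.
Qed.

Lemma has_sum_components nu f S :
  has_sum nu f S <->
  has_sumR nu (fun k => fst (f k)) (fst S) /\ has_sumR nu (fun k => snd (f k)) (snd S).
Proof.
  split.
  - intros H; split; intros eps He; destruct (H eps He) as [F0 [L0 P0]];
      exists F0; split; auto; intros F ND LF I; specialize (P0 F ND LF I);
      destruct (components_le_Cmod (Csub (fsum F f) S)) as [B1 B2];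
      simpl in B1, B2; [rewrite <- fsum_fst | rewrite <- fsum_snd]; lra.
  - intros [H1 H2] eps He.
    destruct (H1 (eps/2)) as [F1 [L1 P1]]; [lra|].
    destruct (H2 (eps/2)) as [F2 [L2 P2]]; [lra|].
    exists (F1 ++ F2); split; [apply Forall_app; auto|].
    intros F ND LF I.
    specialize (P1 F ND LF (fun x Hx => I x (in_or_app _ _ _ (or_introl Hx)))).
    specialize (P2 F ND LF (fun x Hx => I x (in_or_app _ _ _ (or_intror Hx)))).
    eapply Rle_lt_trans; [apply Cmod_le_components|].
    simpl; rewrite fsum_fst, fsum_snd; lra.
Qed.

Lemma fsumR_ext nu F g h : Forall (lat nu) F -> (forall k, lat nu k -> g k = h k) ->
  fsumR F g = fsumR F h.
Proof. induction 1; intros E; simpl; [reflexivity|]. rewrite E, IHForall; auto. Qed.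

Lemma has_sumR_ext nu g h s :
  (forall k, lat nu k -> g k = h k) -> has_sumR nu g s -> has_sumR nu h s.
Proof.
  intros E H eps He. destruct (H eps He) as [F0 [L P]]. exists F0; split; auto.
  intros F ND LF I. rewrite <- (fsumR_ext nu F g h LF E). auto.
Qed.

Lemma has_sumR_lin nu g h s t (a b : R) : has_sumR nu g s -> has_sumR nu h t ->
  has_sumR nu (fun k => a * g k + b * h k) (a * s + b * t).
Proof.
  intros H1 H2 eps He.
  set (M := Rabs a + Rabs b + 1).
  assert (HM : 0 < M) by (unfold M; pose proof (Rabs_pos a); pose proof (Rabs_pos b); lra).
  destruct (H1 (eps / M)) as [F1 [L1 P1]]; [apply Rdiv_lt_0_compat; lra|].
  destruct (H2 (eps / M)) as [F2 [L2 P2]]; [apply Rdiv_lt_0_compat; lra|].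
  exists (F1 ++ F2); split; [apply Forall_app; auto|].
  intros F ND LF I.
  specialize (P1 F ND LF (fun x Hx => I x (in_or_app _ _ _ (or_introl Hx)))).
  specialize (P2 F ND LF (fun x Hx => I x (in_or_app _ _ _ (or_intror Hx)))).
  assert (Hsum : fsumR F (fun k => a * g k + b * h k) - (a * s + b * t)
                 = a * (fsumR F g - s) + b * (fsumR F h - t)).
  { clear. induction F as [|k F IH]; simpl; [ring|]. lra. }
  rewrite Hsum.
  eapply Rle_lt_trans; [apply Rabs_triang|]. rewrite !Rabs_mult.
  apply Rle_lt_trans with ((Rabs a + Rabs b) * (eps / M)).
  - pose proof (Rabs_pos a); pose proof (Rabs_pos b). nra.
  - apply Rlt_le_trans with (M * (eps / M)); [|right; field; lra].
    apply Rmult_lt_compat_r; [apply Rdiv_lt_0_compat|unfold M]; lra.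
Qed.

Lemma has_sum_congr nu f g S T :
  (forall k, lat nu k -> f k = g k) -> S = T -> has_sum nu f S -> has_sum nu g T.
Proof.
  intros E <- H. apply has_sum_components in H as [H1 H2].
  apply has_sum_components; split; eapply has_sumR_ext; eauto;
    intros k Lk; simpl; rewrite E; auto.
Qed.

Lemma has_sum_add nu f g S T : has_sum nu f S -> has_sum nu g T ->
  has_sum nu (fun k => Cadd (f k) (g k)) (Cadd S T).
Proof.
  intros Hf Hg. apply has_sum_components in Hf as [F1 F2], Hg as [G1 G2].
  apply has_sum_components; split.
  - replace (fst (Cadd S T)) with (1 * fst S + 1 * fst T) by (simpl; ring).
    eapply has_sumR_ext; [|apply (has_sumR_lin _ _ _ _ _ 1 1 F1 G1)].
    intros; simpl; ring.
  - replace (snd (Cadd S T)) with (1 * snd S + 1 * snd T) by (simpl; ring).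
    eapply has_sumR_ext; [|apply (has_sumR_lin _ _ _ _ _ 1 1 F2 G2)].
    intros; simpl; ring.
Qed.

Lemma has_sum_scal nu f S c : has_sum nu f S ->
  has_sum nu (fun k => Cmul c (f k)) (Cmul c S).
Proof.
  intros Hf. apply has_sum_components in Hf as [F1 F2].
  apply has_sum_components; split.
  - replace (fst (Cmul c S)) with (fst c * fst S + (- snd c) * snd S)
      by (simpl; ring).
    eapply has_sumR_ext; [|apply (has_sumR_lin _ _ _ _ _ _ _ F1 F2)].
    intros; simpl; ring.
  - replace (snd (Cmul c S)) with (snd c * fst S + fst c * snd S)
      by (simpl; ring).
    eapply has_sumR_ext; [|apply (has_sumR_lin _ _ _ _ _ _ _ F1 F2)].
    intros; simpl; ring.
Qed.

Lemma fsumR_zero F g : Forall (fun k => g k = 0) F -> fsumR F g = 0.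
Proof. induction 1; simpl; [reflexivity|]. rewrite H, IHForall; ring. Qed.

Lemma fsum_zero F : fsum F (fun _ => C0) = C0.
Proof. induction F as [|k F IH]; simpl; [reflexivity|]. rewrite IH. cx_ring. Qed.

Lemma has_sum_zero nu : has_sum nu (fun _ => C0) C0.
Proof.
  intros eps He. exists nil; split; [constructor|]. intros F _ _ _.
  rewrite fsum_zero. unfold Cmod, Csub, C0; simpl.
  replace ((0 - 0) * (0 - 0) + (0 - 0) * (0 - 0)) with 0 by ring.
  rewrite sqrt_0; exact He.
Qed.

Lemma fsumR_single nu p g F : (forall k, lat nu k -> k <> p -> g k = 0) ->
  NoDup F -> Forall (lat nu) F -> In p F -> fsumR F g = g p.
Proof.
  intros Z ND. induction ND as [|x F Hx ND IH]; intros LF Ip; [destruct Ip|].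
  inversion LF; subst. simpl. destruct Ip as [-> | Ip].
  - rewrite fsumR_zero; [ring|]. rewrite Forall_forall in *. intros k Hk.
    apply Z; auto. intros ->; auto.
  - rewrite IH, Z; auto; [ring|]. intros ->; auto.
Qed.

Lemma has_sumR_single nu p g : lat nu p ->
  (forall k, lat nu k -> k <> p -> g k = 0) -> has_sumR nu g (g p).
Proof.
  intros Lp Z eps He. exists (p :: nil); split; [constructor; auto|].
  intros F ND LF I. rewrite (fsumR_single nu p g F Z ND LF) by (apply I; left; auto).
  unfold Rminus; rewrite Rplus_opp_r, Rabs_R0; exact He.
Qed.

Lemma has_sum_single nu p f S : lat nu p ->
  (forall k, lat nu k -> k <> p -> f k = C0) -> f p = S -> has_sum nu f S.
Proof.
  intros Lp Z <-. apply has_sum_components; split;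
    apply (has_sumR_single nu p); auto; intros k Lk Hk; rewrite Z; auto.
Qed.

Definition nodup_pts (F : list (list Z)) := nodup (list_eq_dec Z.eq_dec) F.

Lemma nodup_pts_spec nu F : Forall (lat nu) F ->
  NoDup (nodup_pts F) /\ Forall (lat nu) (nodup_pts F) /\ incl F (nodup_pts F).
Proof.
  unfold nodup_pts; intros L. split; [apply NoDup_nodup|]. split.
  - rewrite Forall_forall in *. intros x Hx. apply L, (nodup_In (list_eq_dec Z.eq_dec)), Hx.
  - intros x Hx. apply nodup_In; auto.
Qed.

(* The zero family only sums to 0 (uniqueness in this special case); used to see
   that the sum of a real family is real. *)
Lemma has_sumR_zero nu s : has_sumR nu (fun _ => 0) s -> s = 0.
Proof.
  intros H. destruct (Req_dec s 0) as [|Hs]; auto. exfalso.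
  destruct (H (Rabs s) (Rabs_pos_lt _ Hs)) as [F0 [L P]].
  destruct (nodup_pts_spec nu F0 L) as [A [B C]].
  specialize (P _ A B C). rewrite fsumR_zero, Rminus_0_l, Rabs_Ropp in P by
    (rewrite Forall_forall; auto). lra.
Qed.

Lemma fsumR_nonneg F g : Forall (fun k => 0 <= g k) F -> 0 <= fsumR F g.
Proof. induction 1; simpl; lra. Qed.

Lemma fsumR_ge1 F g p : Forall (fun k => 0 <= g k) F -> In p F -> g p <= fsumR F g.
Proof.
  induction 1 as [|x F Hx HF IH]; intros Ip; [destruct Ip|]. simpl.
  destruct Ip as [-> | Ip]; [pose proof (fsumR_nonneg F g HF) | specialize (IH Ip)]; lra.
Qed.

Lemma fsumR_ge2 F g p q : Forall (fun k => 0 <= g k) F -> NoDup F ->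
  In p F -> In q F -> p <> q -> g p + g q <= fsumR F g.
Proof.
  intros Nn ND. revert Nn. induction ND as [|x F Hx ND IH]; intros Nn Ip Iq Hpq;
    [destruct Ip|].
  inversion Nn as [|? ? Hgx HF]; subst. simpl.
  destruct Ip as [-> | Ip]; destruct Iq as [-> | Iq].
  - congruence.
  - pose proof (fsumR_ge1 F g q HF Iq); lra.
  - pose proof (fsumR_ge1 F g p HF Ip); lra.
  - specialize (IH HF Ip Iq Hpq); lra.
Qed.

Lemma has_sumR_ge2 nu g s p q : has_sumR nu g s ->
  (forall k, lat nu k -> 0 <= g k) -> lat nu p -> lat nu q -> p <> q -> g p + g q <= s.
Proof.
  intros H Nn Lp Lq Hpq.
  destruct (Rle_dec (g p + g q) s) as [|Hn]; auto. exfalso.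
  destruct (H (g p + g q - s)) as [F0 [L P]]; [lra|].
  assert (LL : Forall (lat nu) (p :: q :: F0)) by (repeat constructor; auto).
  destruct (nodup_pts_spec nu _ LL) as [A [B C]].
  specialize (P _ A B (fun x Hx => C x (or_intror (or_intror Hx)))).
  assert (g p + g q <= fsumR (nodup_pts (p :: q :: F0)) g).
  { apply fsumR_ge2; auto; [|apply C; simpl; auto..].
    rewrite Forall_forall in *; intros; apply Nn, B; auto. }
  apply Rabs_def2 in P. lra.
Qed.

Lemma length_shift (k : list Z) j s : (j < length k)%nat -> length (shift k j s) = length k.
Proof.
  intros H. unfold shift. rewrite length_app, length_firstn. cbn [length].
  rewrite length_skipn. lia.
Qed.

Lemma nth_shift (k : list Z) j s i : (j < length k)%nat ->
  nth i (shift k j s) 0%Z = if Nat.eqb i j then (nth j k 0 + s)%Z else nth i k 0%Z.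
Proof.
  intros H. unfold shift.
  assert (Hl : length (firstn j k) = j) by (rewrite length_firstn; lia).
  destruct (lt_eq_lt_dec i j) as [[Hlt|Heq]|Hgt].
  - rewrite app_nth1, nth_firstn by lia.
    replace (i <? j)%nat with true by (symmetry; apply Nat.ltb_lt; auto).
    replace (Nat.eqb i j) with false by (symmetry; apply Nat.eqb_neq; lia). reflexivity.
  - subst. rewrite app_nth2 by lia. rewrite Hl, Nat.sub_diag, Nat.eqb_refl. reflexivity.
  - rewrite app_nth2 by lia. rewrite Hl.
    replace (i - j)%nat with (S (i - j - 1)) by lia. cbn [nth].
    rewrite nth_skipn. replace (S j + (i - j - 1))%nat with i by lia.
    replace (Nat.eqb i j) with false by (symmetry; apply Nat.eqb_neq; lia). reflexivity.
Qed.

Lemma lat_shift nu k j s : lat nu k -> (j < nu)%nat -> lat nu (shift k j s).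
Proof. unfold lat; intros H Hj. rewrite length_shift; lia. Qed.

Lemma shift_eq_iff nu (k m : list Z) j s : lat nu k -> lat nu m -> (j < nu)%nat ->
  shift k j s = m <-> k = shift m j (- s).
Proof.
  unfold lat; intros Lk Lm Hj.
  assert (Hinv : forall x t, length x = nu -> shift (shift x j t) j (- t) = x).
  { intros x t Lx.
    assert (Ls : length (shift x j t) = nu) by (rewrite length_shift; lia).
    apply nth_ext with 0%Z 0%Z; [rewrite length_shift; lia|].
    intros i Hi. rewrite !nth_shift by lia.
    rewrite Nat.eqb_refl. destruct (Nat.eqb_spec i j); subst; [lia|reflexivity]. }
  split; intros E.
  - rewrite <- E. symmetry. apply Hinv; auto.
  - rewrite E. pose proof (Hinv m (- s)%Z Lm) as H. rewrite Z.opp_involutive in H. exact H.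
Qed.

Lemma shift_neq nu (k : list Z) j s : lat nu k -> (j < nu)%nat -> s <> 0%Z ->
  shift k j s <> k.
Proof.
  unfold lat; intros Lk Hj Hs E.
  assert (E' : nth j (shift k j s) 0%Z = nth j k 0%Z) by (rewrite E; reflexivity).
  rewrite nth_shift, Nat.eqb_refl in E' by lia. lia.
Qed.

Definition delta (m : list Z) : list Z -> Cx :=
  fun k => if list_eq_dec Z.eq_dec k m then RtoC 1 else C0.

Lemma delta_same m : delta m m = RtoC 1.
Proof. unfold delta. destruct (list_eq_dec Z.eq_dec m m); congruence. Qed.

Lemma delta_other m k : k <> m -> delta m k = C0.
Proof. unfold delta. destruct (list_eq_dec Z.eq_dec k m); congruence. Qed.

(* The Laplacian restricted to a list of coordinate directions; [J0] uses all of
   [0 .. nu-1].  Induction on the list of directions drives the lemmas below. *)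
Definition J0_dirs (L : list nat) (u : list Z -> Cx) (k : list Z) : Cx :=
  fold_right (fun j acc => Cadd (Cadd (u (shift k j 1%Z)) (u (shift k j (-1)%Z))) acc) C0 L.

Lemma J0_as_dirs nu u k : J0 nu u k = J0_dirs (seq 0 nu) u k.
Proof. reflexivity. Qed.

Lemma seq_dirs_bound nu : forall j, In j (seq 0 nu) -> (j < nu)%nat.
Proof. intros j Hj. apply in_seq in Hj. lia. Qed.

Definition lincomb (A : Cx) (u : list Z -> Cx) (B : Cx) (w : list Z -> Cx) : list Z -> Cx :=
  fun k => Cadd (Cmul A (u k)) (Cmul B (w k)).

Lemma J0_dirs_lincomb L A u B w k :
  J0_dirs L (lincomb A u B w) k = lincomb A (J0_dirs L u) B (J0_dirs L w) k.
Proof.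
  unfold lincomb. induction L as [|j L IH]; simpl; [cx_ring|].
  rewrite IH. cx_ring.
Qed.

Lemma Jop_lincomb nu d A u B w k :
  Jop nu d (lincomb A u B w) k = lincomb A (Jop nu d u) B (Jop nu d w) k.
Proof.
  unfold Jop, Mult. rewrite J0_as_dirs, J0_dirs_lincomb.
  unfold lincomb. rewrite <- !J0_as_dirs. cx_ring.
Qed.

Lemma delta_shift_pairing nu m j s u : lat nu m -> (j < nu)%nat ->
  has_sum nu (fun k => Cmul (delta m (shift k j s)) (Cconj (u k)))
    (Cconj (u (shift m j (- s)))).
Proof.
  intros Lm Hj. set (p := shift m j (- s)).
  assert (Lp : lat nu p) by (apply lat_shift; auto).
  assert (Hp : shift p j s = m) by (apply (shift_eq_iff nu); auto).
  apply (has_sum_single nu p); auto.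
  - intros k Lk Hk. rewrite delta_other; [cx_ring|].
    intros E. apply Hk, (shift_eq_iff nu); auto.
  - rewrite Hp, delta_same. cx_ring.
Qed.

Lemma J0_dirs_delta_pairing nu m u L : lat nu m -> (forall j, In j L -> (j < nu)%nat) ->
  has_sum nu (fun k => Cmul (J0_dirs L (delta m) k) (Cconj (u k))) (Cconj (J0_dirs L u m)).
Proof.
  intros Lm HL. induction L as [|j L IH]; simpl.
  - apply (has_sum_congr nu (fun _ => C0) _ C0); [intros; cx_ring | cx_ring | apply has_sum_zero].
  - assert (Hj : (j < nu)%nat) by (apply HL; left; auto).
    specialize (IH (fun i Hi => HL i (or_intror Hi))).
    pose proof (has_sum_add _ _ _ _ _ (delta_shift_pairing nu m j 1 u Lm Hj)
                  (delta_shift_pairing nu m j (-1) u Lm Hj)) as Hpair.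
    pose proof (has_sum_add _ _ _ _ _ Hpair IH) as Hall.
    refine (has_sum_congr _ _ _ _ _ _ _ Hall); intros; simpl; cx_ring.
Qed.

Lemma J0_dirs_isolated nu L u m : lat nu m -> (forall j, In j L -> (j < nu)%nat) ->
  (forall k, lat nu k -> k <> m -> u k = C0) -> J0_dirs L u m = C0.
Proof.
  intros Lm HL Z. induction L as [|j L IH]; simpl; [reflexivity|].
  assert (Hj : (j < nu)%nat) by (apply HL; left; auto).
  rewrite IH by (intros; apply HL; right; auto).
  rewrite !Z; try apply lat_shift; auto; try (apply (shift_neq nu); auto; lia).
  cx_ring.
Qed.

(* The value of a sesquilinear form on [A e1 + B e2], given its Gram entries
   [S_ij = <e_i, e_j>]. *)
Definition sesq_form (A B S11 S12 S21 S22 : Cx) : Cx :=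
  Cadd (Cadd (Cmul (Cmul A (Cconj A)) S11) (Cmul (Cmul A (Cconj B)) S12))
       (Cadd (Cmul (Cmul B (Cconj A)) S21) (Cmul (Cmul B (Cconj B)) S22)).

(* With [P = |u|^2] and [u m = P conj w],
   the vector [(a - b w) u + b delta_m] is [a u + b e] with [e = delta_m - w u]
   orthogonal to [u] and [|e|^2 = 1 - P |w|^2]; for [J], the [conj b] cross term vanishes
   because [J u = lam u], which leaves the upper triangular compression. *)
Lemma sesq_form_orth_norm a b w P :
  sesq_form (Csub (RtoC a) (Cmul b w)) b (RtoC P) (Cmul (RtoC P) (Cconj w))
        (Cmul (RtoC P) w) (RtoC 1)
  = RtoC (a * a * P + nsq b * (1 - P * nsq w)).
Proof. unfold sesq_form. cx_ring. Qed.

Lemma sesq_form_orth_form a b w P lam g z :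
  sesq_form (Csub (RtoC a) (Cmul b w)) b (Cmul lam (RtoC P)) (Cmul lam (Cmul (RtoC P) (Cconj w))) g z
  = Cadd (Cmul (RtoC (a * a * P)) lam)
      (Cadd (Cmul (RtoC a) (Cmul b (Csub g (Cmul lam (Cmul (RtoC P) w)))))
            (Cmul (RtoC (nsq b))
               (sesq_form (Csub (RtoC 0) w) (RtoC 1)
                      (Cmul lam (RtoC P)) (Cmul lam (Cmul (RtoC P) (Cconj w))) g z))).
Proof. unfold sesq_form. cx_ring. Qed.

Lemma has_sum_sesq nu f1 f2 g1 g2 A B S11 S12 S21 S22 :
  has_sum nu (fun k => Cmul (f1 k) (Cconj (g1 k))) S11 ->
  has_sum nu (fun k => Cmul (f1 k) (Cconj (g2 k))) S12 ->
  has_sum nu (fun k => Cmul (f2 k) (Cconj (g1 k))) S21 ->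
  has_sum nu (fun k => Cmul (f2 k) (Cconj (g2 k))) S22 ->
  has_sum nu (fun k => Cmul (lincomb A f1 B f2 k) (Cconj (lincomb A g1 B g2 k)))
    (sesq_form A B S11 S12 S21 S22).
Proof.
  intros H11 H12 H21 H22.
  pose proof (has_sum_add _ _ _ _ _
    (has_sum_add _ _ _ _ _ (has_sum_scal _ _ _ (Cmul A (Cconj A)) H11)
                           (has_sum_scal _ _ _ (Cmul A (Cconj B)) H12))
    (has_sum_add _ _ _ _ _ (has_sum_scal _ _ _ (Cmul B (Cconj A)) H21)
                           (has_sum_scal _ _ _ (Cmul B (Cconj B)) H22))) as H.
  refine (has_sum_congr _ _ _ _ _ _ eq_refl H). intros k _. unfold lincomb. cx_ring.
Qed.

Lemma pairing_delta_right nu m v : lat nu m ->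
  has_sum nu (fun k => Cmul (v k) (Cconj (delta m k))) (v m).
Proof.
  intros Lm. apply (has_sum_single nu m); auto.
  - intros k _ Hk. rewrite delta_other by auto. cx_ring.
  - rewrite delta_same. cx_ring.
Qed.

Lemma pairing_delta_left nu m v : lat nu m ->
  has_sum nu (fun k => Cmul (delta m k) (Cconj (v k))) (Cconj (v m)).
Proof.
  intros Lm. apply (has_sum_single nu m); auto.
  - intros k _ Hk. rewrite delta_other by auto. cx_ring.
  - rewrite delta_same. cx_ring.
Qed.

Lemma Jop_delta_pairing nu d m u : lat nu m ->
  has_sum nu (fun k => Cmul (Jop nu d (delta m) k) (Cconj (u k)))
    (Cadd (Cconj (J0 nu u m)) (Cmul (d m) (Cconj (u m)))).
Proof.
  intros Lm.
  pose proof (has_sum_add _ _ _ _ _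
    (J0_dirs_delta_pairing nu m u (seq 0 nu) Lm (seq_dirs_bound nu))
    (pairing_delta_left nu m (fun k => Cmul (Cconj (d k)) (u k)) Lm)) as H.
  refine (has_sum_congr _ _ _ _ _ _ _ H).
  - intros k _. unfold Jop, Mult. rewrite J0_as_dirs. cx_ring.
  - rewrite J0_as_dirs. cx_ring.
Qed.

Lemma sq_norm_pairing nu v S :
  has_sum nu (fun k => RtoC (Cmod (v k) * Cmod (v k))) S <->
  has_sum nu (fun k => Cmul (v k) (Cconj (v k))) S.
Proof.
  split; apply has_sum_congr; auto; intros k _;
    rewrite Cmul_conj_self, Cmod_sq; reflexivity.
Qed.

Lemma test_vector_norm nu u m P A B : lat nu m ->
  has_sum nu (fun k => RtoC (Cmod (u k) * Cmod (u k))) (RtoC P) ->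
  has_sum nu (fun k => RtoC (Cmod (lincomb A u B (delta m) k) * Cmod (lincomb A u B (delta m) k)))
    (sesq_form A B (RtoC P) (u m) (Cconj (u m)) (RtoC 1)).
Proof.
  intros Lm Hu. apply sq_norm_pairing in Hu. apply sq_norm_pairing.
  apply has_sum_sesq; auto.
  - apply pairing_delta_right; auto.
  - apply pairing_delta_left; auto.
  - rewrite <- (delta_same m). apply pairing_delta_right; auto.
Qed.

Lemma test_vector_form nu d u lam m P A B : lat nu m ->
  has_sum nu (fun k => RtoC (Cmod (u k) * Cmod (u k))) (RtoC P) ->
  (forall k, lat nu k -> Jop nu d u k = Cmul lam (u k)) ->
  has_sum nu (fun k => Cmul (Jop nu d (lincomb A u B (delta m)) k)
                            (Cconj (lincomb A u B (delta m) k)))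
    (sesq_form A B (Cmul lam (RtoC P)) (Cmul lam (u m))
       (Cadd (Cconj (J0 nu u m)) (Cmul (d m) (Cconj (u m)))) (Jop nu d (delta m) m)).
Proof.
  intros Lm Hu Heig. apply sq_norm_pairing in Hu.
  eapply (has_sum_congr nu (fun k => Cmul (lincomb A (Jop nu d u) B (Jop nu d (delta m)) k)
                                          (Cconj (lincomb A u B (delta m) k))));
    [intros k _; rewrite Jop_lincomb; reflexivity | reflexivity |].
  apply has_sum_sesq.
  - refine (has_sum_congr _ _ _ _ _ _ eq_refl (has_sum_scal _ _ _ lam Hu)).
    intros k Lk. rewrite Heig by auto. cx_ring.
  - rewrite <- Heig by auto. apply pairing_delta_right; auto.
  - apply Jop_delta_pairing; auto.
  - apply pairing_delta_right; auto.
Qed.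

(* A root of [A t^2 - B t + r] of size at most [2 r / B], found without dividing
   by [A]: [t = 2 r / (B + sqrt (B^2 - 4 A r))]. *)
Lemma quadratic_small_root (A B r : R) : 0 < B -> 0 <= r -> 4 * A * r <= B * B ->
  exists t, 0 <= t <= 2 * r / B /\ A * t * t - B * t + r = 0.
Proof.
  intros HB Hr Hdisc.
  set (s := sqrt (B * B - 4 * A * r)).
  assert (Hs2 : s * s = B * B - 4 * A * r) by (apply sqrt_sqrt; lra).
  assert (Hs0 : 0 <= s) by apply sqrt_pos.
  exists (2 * r / (B + s)). split; [split|].
  - apply Rmult_le_pos; [lra|]. left; apply Rinv_0_lt_compat; lra.
  - unfold Rdiv. apply Rmult_le_compat_l; [lra|].
    apply Rinv_le_contravar; lra.
  - replace (A * (2 * r / (B + s)) * (2 * r / (B + s)) - B * (2 * r / (B + s)) + r)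
      with (r * (4 * A * r - B * B + s * s) / ((B + s) * (B + s))) by (field; lra).
    rewrite Hs2. unfold Rdiv. ring.
Qed.

(* Core of the 2x2 lemma: for small [z] one can choose [t] in [[0,1)] with
   [|z - t mm|^2 = t (1 - t) K], i.e. the circle of radius [sqrt (t (1 - t) K)]
   around [t mm] passes through [z]. *)
Lemma ellipse_root (K : R) (mm : Cx) : 0 < K ->
  exists eps, 0 < eps /\ forall z : Cx, nsq z < eps * eps ->
    exists t, 0 <= t < 1 /\ nsq (Csub z (Cmul (RtoC t) mm)) = t * (1 - t) * K.
Proof.
  intros HK.
  set (M := 1 + K + nsq mm).
  assert (HKM : K < M) by (pose proof (nsq_nonneg mm); unfold M; lra).
  assert (HmM : nsq mm < M) by (pose proof (nsq_nonneg mm); unfold M; lra).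
  exists (K / (4 * M)). split; [apply Rdiv_lt_0_compat; lra|].
  intros z Hz.
  set (r := nsq z). set (R0 := fst z * fst mm + snd z * snd mm).
  assert (Hr : 0 <= r) by apply nsq_nonneg.
  assert (Hsmall : 16 * r * (M * M) < K * K).
  { replace (K * K) with (16 * (K / (4 * M) * (K / (4 * M))) * (M * M)) by (field; lra).
    apply Rmult_lt_compat_r; [nra|]. unfold r; lra. }
  assert (Hcs : R0 * R0 <= r * nsq mm).
  { assert (E : r * nsq mm - R0 * R0
               = (fst z * snd mm - snd z * fst mm) * (fst z * snd mm - snd z * fst mm))
      by (unfold r, R0, nsq; ring).
    pose proof (Rle_0_sqr (fst z * snd mm - snd z * fst mm)). unfold Rsqr in *. lra. }
  assert (HMM : M <= M * M) by (unfold M in *; pose proof (nsq_nonneg mm); nra).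
  assert (HrM : r * nsq mm <= r * (M * M)) by (apply Rmult_le_compat_l; lra).
  assert (HR0 : 16 * (R0 * R0) <= K * K) by lra.
  assert (HB : K / 2 <= K + 2 * R0) by nra.
  assert (Hdisc : 4 * (K + nsq mm) * r <= (K + 2 * R0) * (K + 2 * R0)).
  { assert (4 * (K + nsq mm) * r <= 4 * (M * M) * r)
      by (apply Rmult_le_compat_r; [exact Hr | unfold M in *; lra]).
    assert (K / 2 * (K / 2) <= (K + 2 * R0) * (K + 2 * R0))
      by (apply Rmult_le_compat; lra).
    lra. }
  destruct (quadratic_small_root (K + nsq mm) (K + 2 * R0) r) as [t [[Ht0 Ht1] Ht]];
    [lra | exact Hr | exact Hdisc |].
  exists t. split; [split; [exact Ht0|]|].
  - apply Rle_lt_trans with (2 * r / (K + 2 * R0)); [exact Ht1|].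
    apply (Rmult_lt_reg_r (K + 2 * R0)); [lra|].
    unfold Rdiv; rewrite Rmult_assoc, Rinv_l, Rmult_1_r by lra. nra.
  - replace (nsq (Csub z (Cmul (RtoC t) mm)))
      with (r - 2 * t * R0 + t * t * nsq mm) by (unfold r, R0; cx_unfold; ring).
    lra.
Qed.

(* The numerical range of the triangular matrix [[lam, c], [0, q]] (in an orthogonal
   basis with squared norms [P] and [n]) contains a neighbourhood of [lam] when [c <> 0]. *)
Lemma two_dim_numerical_range (P n : R) (c lam q : Cx) : 0 < P -> 0 < n -> c <> C0 ->
  exists eps, 0 < eps /\ forall w : Cx, Cmod (Csub w lam) < eps ->
    exists (a : R) (b : Cx), a * a * P + nsq b * n = 1 /\
      Cadd (Cmul (RtoC (a * a * P)) lam)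
           (Cadd (Cmul (RtoC a) (Cmul b c)) (Cmul (RtoC (nsq b)) q)) = w.
Proof.
  intros HP Hn Hc. pose proof (nsq_pos c Hc) as Hc2.
  set (mm := Csub (Cmul (RtoC (/ n)) q) lam).
  destruct (ellipse_root (nsq c / (P * n)) mm) as [eps [Heps Hroot]].
  { apply Rdiv_lt_0_compat; nra. }
  exists eps; split; [exact Heps|]. intros w Hw.
  set (z := Csub w lam).
  destruct (Hroot z) as [t [[Ht0 Ht1] Ht]].
  { rewrite <- Cmod_sq. assert (0 <= Cmod z) by apply sqrt_pos.
    assert (Cmod z < eps) by exact Hw. nra. }
  set (a := sqrt ((1 - t) / P)).
  assert (Ha2 : a * a = (1 - t) / P) by (apply sqrt_sqrt; left; apply Rdiv_lt_0_compat; lra).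
  assert (Ha : 0 < a) by (apply sqrt_lt_R0, Rdiv_lt_0_compat; lra).
  assert (Hac : Cmul (RtoC a) c <> C0).
  { intros E. destruct (Cmul_eq_C0 _ _ E) as [Ea|]; [|contradiction].
    injection Ea; lra. }
  set (b := Cmul (Csub z (Cmul (RtoC t) mm)) (Cinv (Cmul (RtoC a) c))).
  assert (Habc : Cmul (RtoC a) (Cmul b c) = Csub z (Cmul (RtoC t) mm)).
  { transitivity (Cmul (Csub z (Cmul (RtoC t) mm))
                       (Cmul (Cmul (RtoC a) c) (Cinv (Cmul (RtoC a) c)))).
    - unfold b. cx_ring.
    - rewrite Cmul_Cinv by exact Hac. cx_ring. }
  assert (Hb : nsq b = t / n).
  { unfold b. rewrite nsq_Cmul, nsq_Cinv, Ht, nsq_Cmul by exact Hac.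
    replace (nsq (RtoC a)) with (a * a) by (cx_unfold; ring).
    rewrite Ha2. field. repeat split; lra. }
  exists a, b. split.
  - rewrite Ha2, Hb. field. lra.
  - rewrite Habc, Hb. replace (a * a * P) with (1 - t) by (rewrite Ha2; field; lra).
    unfold z, mm. apply Cx_ext; cx_unfold; field; lra.
Qed.

(* The off-diagonal entry of the compression: if [(J0 u)(m) + d(m) u(m) = lam u(m)],
   then [<(J - lam) delta_m, u> = 2 i (Im d(m) - Im lam) conj (u m)]. *)
Lemma eigen_defect lam dm um Jum : Cadd Jum (Cmul dm um) = Cmul lam um ->
  Csub (Cadd (Cconj Jum) (Cmul dm (Cconj um))) (Cmul lam (Cconj um))
  = Cmul (0, 2 * (Im dm - Im lam)) (Cconj um).
Proof.
  intros E. replace Jum with (Csub (Cmul lam um) (Cmul dm um)) by (rewrite <- E; cx_ring).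
  unfold Im. cx_ring.
Qed.

Lemma l2_real_sum nu u : l2 nu u ->
  exists P, has_sum nu (fun k => RtoC (Cmod (u k) * Cmod (u k))) (RtoC P).
Proof.
  intros [S HS]. exists (fst S).
  assert (Him : snd S = 0).
  { apply has_sum_components in HS as [_ H]. apply (has_sumR_zero nu), H. }
  refine (has_sum_congr _ _ _ _ _ (fun k _ => eq_refl) _ HS).
  apply Cx_ext; simpl; auto.
Qed.

(* An eigenvector with [u m <> 0] and [Im d(m) <> Im lam] is not supported at [m]
   alone: otherwise [(J0 u)(m) = 0] and the eigenvalue equation gives [lam = d(m)]. *)
Lemma eigenvector_not_isolated nu d lam u m : lat nu m ->
  (forall k, lat nu k -> Jop nu d u k = Cmul lam (u k)) -> u m <> C0 -> Im (d m) <> Im lam ->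
  exists k, lat nu k /\ k <> m /\ u k <> C0.
Proof.
  intros Lm Heig Hum Hne. apply NNPP; intros Hno.
  assert (Hiso : J0 nu u m = C0).
  { rewrite J0_as_dirs. apply (J0_dirs_isolated nu); auto using seq_dirs_bound.
    intros k Lk Hk. apply NNPP; intros Hk0. apply Hno; eauto. }
  pose proof (Heig m Lm) as E. unfold Jop, Mult in E. rewrite Hiso in E.
  assert (Hl : Cmul (Csub lam (d m)) (u m) = C0).
  { apply Cx_ext; pose proof (f_equal fst E); pose proof (f_equal snd E);
      cx_unfold; lra. }
  destruct (Cmul_eq_C0 _ _ Hl) as [Hd|]; [|contradiction].
  apply Hne. apply (f_equal snd) in Hd. unfold Im; cx_unfold; lra.
Qed.

Lemma compressed_form_in_Num nu d lam u m P w a b : lat nu m ->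
  has_sum nu (fun k => RtoC (Cmod (u k) * Cmod (u k))) (RtoC P) ->
  (forall k, lat nu k -> Jop nu d u k = Cmul lam (u k)) ->
  u m = Cmul (RtoC P) (Cconj w) -> a * a * P + nsq b * (1 - P * nsq w) = 1 ->
  Num nu (Jop nu d)
    (sesq_form (Csub (RtoC a) (Cmul b w)) b (Cmul lam (RtoC P)) (Cmul lam (u m))
       (Cadd (Cconj (J0 nu u m)) (Cmul (d m) (Cconj (u m)))) (Jop nu d (delta m) m)).
Proof.
  intros Lm Hu Heig Hw Hnorm.
  set (A := Csub (RtoC a) (Cmul b w)).
  pose proof (test_vector_norm nu u m P A b Lm Hu) as HN.
  assert (Hw' : Cconj (u m) = Cmul (RtoC P) w) by (rewrite Hw; cx_ring).
  rewrite Hw', Hw in HN. unfold A in HN. rewrite sesq_form_orth_norm, Hnorm in HN.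
  exists (lincomb A u b (delta m)). split; [exists (RtoC 1); exact HN|]. split; [exact HN|].
  apply test_vector_form; auto.
Qed.

Lemma boundary_eigenvector_support nu d lam u m : lat nu m -> l2 nu u ->
  (forall k, lat nu k -> Jop nu d u k = Cmul lam (u k)) ->
  in_boundary (Num nu (Jop nu d)) lam ->
  u m = C0 \/ Im (d m) = Im lam.
Proof.
  intros Lm Hl2 Heig Hbd.
  destruct (classic (u m = C0)) as [|Hum0]; [left; auto|right].
  destruct (Req_dec (Im (d m)) (Im lam)) as [|Hne]; [auto|exfalso].
  destruct (l2_real_sum nu u Hl2) as [P Hu].
  set (g := Cadd (Cconj (J0 nu u m)) (Cmul (d m) (Cconj (u m)))).
  set (c := Csub g (Cmul lam (Cconj (u m)))).
  assert (Hc : c <> C0).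
  { unfold c, g. rewrite (eigen_defect lam (d m) (u m) (J0 nu u m) (Heig m Lm)).
    intros E. destruct (Cmul_eq_C0 _ _ E) as [E0|E0].
    - apply Hne. apply (f_equal snd) in E0. simpl in E0. lra.
    - apply Hum0. apply Cx_ext; pose proof (f_equal fst E0); pose proof (f_equal snd E0);
        cx_unfold; lra. }
  destruct (eigenvector_not_isolated nu d lam u m Lm Heig Hum0 Hne) as [k [Lk [Hkm Hk0]]].
  assert (HP : nsq (u m) + nsq (u k) <= P).
  { apply has_sum_components in Hu as [Hu1 _]. simpl in Hu1.
    rewrite <- !Cmod_sq. apply (has_sumR_ge2 nu _ _ m k Hu1); auto.
    intros; apply Rle_0_sqr. }
  pose proof (nsq_pos _ Hum0). pose proof (nsq_pos _ Hk0).
  set (w := Cmul (Cconj (u m)) (RtoC (/ P))).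
  assert (Hw : u m = Cmul (RtoC P) (Cconj w)) by (unfold w; apply Cx_ext; cx_unfold; field; lra).
  assert (Hn : 0 < 1 - P * nsq w).
  { assert (nsq (u m) = P * P * nsq w) by (rewrite Hw, nsq_Cmul; cx_unfold; ring). nra. }
  set (z := Jop nu d (delta m) m).
  set (q := sesq_form (Csub (RtoC 0) w) (RtoC 1) (Cmul lam (RtoC P))
                      (Cmul lam (Cmul (RtoC P) (Cconj w))) g z).
  destruct (two_dim_numerical_range P (1 - P * nsq w) c lam q) as [eps [Heps Hrange]];
    [lra | exact Hn | exact Hc |].
  destruct (Hbd eps Heps) as [_ [v [Hv Hvl]]]. apply Hv.
  destruct (Hrange v Hvl) as [a [b [Hnorm Hval]]].
  replace v with (sesq_form (Csub (RtoC a) (Cmul b w)) b (Cmul lam (RtoC P)) (Cmul lam (u m)) g z).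
  - apply compressed_form_in_Num; auto.
  - assert (Hw' : Cconj (u m) = Cmul (RtoC P) w) by (rewrite Hw; cx_ring).
    rewrite <- Hval, Hw, sesq_form_orth_form. unfold c. rewrite Hw'. reflexivity.
Qed.

Lemma real_part_eigen_equation nu d u lam k :
  Jop nu d u k = Cmul lam (u k) -> u k = C0 \/ Im (d k) = Im lam ->
  Jop nu (ReD d) u k = Cmul (RtoC (Re lam)) (u k).
Proof.
  intros E Hsupp.
  assert (Hsplit : Jop nu (ReD d) u k = Csub (Jop nu d u k) (Cmul (0, Im (d k)) (u k)))
    by (unfold Jop, Mult, ReD, Re, Im; cx_ring).
  rewrite Hsplit, E. destruct Hsupp as [H0|HIm].
  - rewrite H0. cx_ring.
  - rewrite HIm. unfold Re, Im. cx_ring.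
Qed.

Theorem mainTheorem3 (nu : nat) (d : list Z -> Cx) :
  (1 <= nu)%nat -> bounded_on nu d ->
  (forall a : R,
     ~ eigenvalue nu (Jop nu (ReD d)) (RtoC a) ->
     forall lam : Cx, boundary_eigenvalue nu (Jop nu d) lam -> Re lam <> a) /\
  (forall b : R,
     (forall k, lat nu k -> Im (d k) <> b) ->
     forall lam : Cx, boundary_eigenvalue nu (Jop nu d) lam -> Im lam <> b).
Proof.
  intros _ _. split.
  - intros a Hnot lam [[u [Hl2 [Hnz Heig]]] Hbd] Hre. apply Hnot.
    exists u. split; [exact Hl2|]. split; [exact Hnz|].
    intros k Lk. rewrite <- Hre. apply real_part_eigen_equation; [exact (Heig k Lk)|].
    exact (boundary_eigenvector_support nu d lam u k Lk Hl2 Heig Hbd).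
  - intros b Hd lam [[u [Hl2 [[k [Lk Hk0]] Heig]]] Hbd] Him.
    destruct (boundary_eigenvector_support nu d lam u k Lk Hl2 Heig Hbd) as [H0|HIm];
      [contradiction | exact (Hd k Lk (eq_trans HIm Him))].
Qed.
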